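(* Let $I$ be a finite set and $T$ a tree on $I$. Let $a_1,\dots,a_k$ be atoms of the lattice $[\hat{0},T]$ whose vertices $v_1,\dots,v_k\in\mathcal{V}(T)$ are pairwise distinct. Then $\mathcal{V}(a_1\vee a_2\vee\dots\vee a_k)=\{v_1,\dots,v_k\}$, where the join is taken in $[\hat{0},T]$.
   Context: A tree on a finite set $I$ is a (non-planar) rooted binary tree whose leaves are bijectively labeled by $I$: vertices are inner vertices (valence $3$) and leaves and the root (valence $1$), edges oriented towards the root; one-leaf trees are allowed. A forest on $I$ is a set of trees whose leaf sets partition $I$; $\mathcal{V}(F)$ is its set of inner vertices. For forests $F,G$ on $I$, $F \leq G$ if there is a continuous map $F\to G$ which (D1) is increasing with respect to orientation towards the root, (D2) maps inner vertices to inner vertices injectively, (D3) is the identity of $I$ on leaves, (D4) is injective on each tree of $F$. This gives the poset $\operatorname{For}(I)$ with minimum $\hat{0}$ (no inner vertices); the interval $[\hat{0},T]$ is a lattice. For $F\le T$ the inner vertices of $F$ are regarded, via these maps, as a subset $\mathcal{V}(F)\subseteq\mathcal{V}(T)$. For distinct leaves $i,j$, $v_{(i,j)}$ is the inner vertex of $T$ where the paths from $i$ and $j$ down to the root meet. The atoms of $[\hat{0},T]$ are the forests with exactly one inner vertex; they correspond to unordered pairs $(i,j)$ of distinct elements of $I$ (one two-leaf tree on $\{i,j\}$, all other leaves isolated), and the vertex of the atom $(i,j)$ is $v_{(i,j)}$, i.e. $\mathcal{V}((i,j))=\{v_{(i,j)}\}$. *)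

From mathcomp Require Import all_boot.
Set Implicit Arguments. Unset Strict Implicit. Unset Printing Implicit Defensive.

Section Forests.
Variable I : finType.

(* Rooted binary trees with leaves labeled in I.  The planar presentation is
   harmless: nothing below depends on the order of the two children. *)
Inductive btree := Leaf of I | Node of btree & btree.

Fixpoint leaves (t : btree) : seq I :=
  match t with Leaf i => [:: i] | Node l r => leaves l ++ leaves r end.

Definition tree_on (t : btree) : Prop := perm_eq (leaves t) (enum I).

Definition forest := seq btree.
Definition forest_on (F : forest) : Prop :=
  perm_eq (flatten (map leaves F)) (enum I).

(* Vertices of a tree are addressed by the path (sequence of child choices)
   from the top inner vertex; ancestors are prefixes. *)
Fixpoint subtree (t : btree) (p : seq bool) : option btree :=
  match p with
  | [::] => Some t
  | b :: p' => match t with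
               | Leaf _ => None
               | Node l r => subtree (if b then r else l) p'
               end
  end.

(* Vertices of a forest: (index of the tree, path in that tree). *)
Definition fpos := (nat * seq bool)%type.

Definition fnode (F : forest) (x : fpos) : option btree :=
  obind (fun t => subtree t x.2) (onth F x.1).

Definition is_inner (F : forest) (x : fpos) : Prop :=
  if fnode F x is Some (Node _ _) then True else False.

Definition is_leaf (F : forest) (x : fpos) (i : I) : Prop :=
  if fnode F x is Some (Leaf j) then j = i else False.

(* A map F -> G satisfying (D1)-(D4), recorded on vertices: each edge of F
   (child -> parent) is sent to the increasing path of G between the images
   of its endpoints.
   - (D3) leaves go to the leaf with the same label;
   - (D2) inner vertices go injectively to inner vertices;
   - (D1)+(D4) the two children of an inner vertex x of F are sent strictly
     below the image of x, into the two different child subtrees of it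
     (this is exactly increasingness plus injectivity on each tree). *)
Definition forest_map (F G : forest) (phi : fpos -> fpos) : Prop :=
  [/\ (forall x i, is_leaf F x i -> is_leaf G (phi x) i),
      (forall x, is_inner F x -> is_inner G (phi x)),
      (forall x y, is_inner F x -> is_inner F y -> phi x = phi y -> x = y) &
      (forall x, is_inner F x ->
         exists c0 c1 r0 r1, c0 <> c1 /\
           phi (x.1, rcons x.2 false) = ((phi x).1, (phi x).2 ++ c0 :: r0) /\
           phi (x.1, rcons x.2 true)  = ((phi x).1, (phi x).2 ++ c1 :: r1))].

Definition forest_le (F G : forest) : Prop := exists phi, forest_map F G phi.

Definition tforest (T : btree) : forest := [:: T].

Fixpoint leaf_pos (t : btree) (i : I) : seq bool :=
  match t with
  | Leaf _ => [::]
  | Node l r => if i \in leaves l then false :: leaf_pos l i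
                else true :: leaf_pos r i
  end.

Fixpoint lcp (p q : seq bool) : seq bool :=
  match p, q with
  | b :: p', c :: q' => if b == c then b :: lcp p' q' else [::]
  | _, _ => [::]
  end.

(* v_(i,j): the vertex where the paths from i and j down to the root meet. *)
Definition vij (T : btree) (i j : I) : seq bool := lcp (leaf_pos T i) (leaf_pos T j).

Definition atom (i j : I) : forest :=
  Node (Leaf i) (Leaf j) :: [seq Leaf x | x <- enum I & (x != i) && (x != j)].

Definition is_join_below (T : btree) (k : nat) (a : 'I_k -> forest) (F : forest) : Prop :=
  [/\ forest_on F, forest_le F (tforest T), (forall m, forest_le (a m) F) &
      (forall G, forest_on G -> forest_le G (tforest T) ->
         (forall m, forest_le (a m) G) -> forest_le F G)].

End Forests.

(* The join of the atoms (i,j) is the forest whose trees are the restrictions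
   of T to the connected components of the graph with edges {i,j}.  Add the
   edges one at a time: if v_(i,j) is new, i and j lie in different components,
   and since the restriction of T to m leaves has m - 1 inner vertices, merging
   the two components adds exactly the inner vertex v_(i,j).  Any join F lies
   below this forest, and a forest map into T is determined on inner vertices
   (an inner vertex goes to the meet of a leaf of each of its two subtrees), so
   the inner vertices of F land among the v_(i,j); each v_(i,j) is reached
   because the atom (i,j) lies below F. *)

From mathcomp Require Import all_boot.
Set Implicit Arguments. Unset Strict Implicit. Unset Printing Implicit Defensive.

Lemma perm_flatten_fibers (T S : eqType) (f : T -> S) (R : seq S) (L : seq T) :
  uniq R -> {subset map f L <= R} ->
  perm_eq (flatten [seq filter (fun x => f x == r) L | r <- R]) L.
Proof.
move=> uR LR; apply/permP => a; rewrite count_flatten sumnE !big_map.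
under eq_bigr => r _ do rewrite count_filter -sum1_count big_mkcond.
rewrite exchange_big -sum1_count [RHS]big_mkcond /=; apply: eq_big_seq => x xL.
case: (a x); last by rewrite big1.
rewrite -big_mkcond sum1_count (eq_count (a2 := pred1 (f x))) => [|r].
  by rewrite count_uniq_mem // LR // map_f.
by rewrite /= eq_sym.
Qed.

Lemma onth_index (T : eqType) (s : seq T) n x : uniq s -> onth s n = Some x ->
  index x s = n.
Proof.
move=> us sn; have := onthTE s n; rewrite sn => n_lt.
by rewrite -(onth_nth x _ _ _ sn) index_uniq.
Qed.

Section Forests.
Variable I : finType.
Implicit Types (t u T : btree I) (F G H : forest I) (i j : I) (p q : seq bool) (x y z : fpos).

Lemma subtree_nil t : subtree t [::] = Some t.
Proof. by case: t. Qed.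

Lemma subtree_cat t p q : subtree t (p ++ q) = obind (fun u => subtree u q) (subtree t p).
Proof. by elim: p t => [|b p IH] [i|l r] //=. Qed.

Lemma subtree_leaves t p u : subtree t p = Some u -> {subset leaves u <= leaves t}.
Proof.
elim: p t => [|b p IH] [j|l r] //= => [[<-] | [<-] | /IH sub_u k /sub_u] //.
by rewrite mem_cat; case: b sub_u => _ ->; rewrite ?orbT.
Qed.

Lemma subtree_leaf_mem t p i : subtree t p = Some (Leaf i) -> i \in leaves t.
Proof. by move/subtree_leaves; apply; rewrite inE. Qed.

Lemma leaf_posP t i : i \in leaves t -> subtree t (leaf_pos t i) = Some (Leaf i).
Proof.
elim: t => [j|l IHl r IHr] /=; first by rewrite inE => /eqP ->.
by rewrite mem_cat; case: ifP => [il _ | _ /= ir]; [apply: IHl | apply: IHr].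
Qed.

Lemma leaf_pos_unique t p i : uniq (leaves t) -> subtree t p = Some (Leaf i) ->
  p = leaf_pos t i.
Proof.
elim: p t => [|b p IH] [j|l r] //=; rewrite cat_uniq => /and3P[ul dis ur].
case: b => sub_i; last by rewrite (subtree_leaf_mem sub_i) (IH _ ul sub_i).
have il : i \notin leaves l.
  by apply: contra dis => il; apply/hasP; exists i => //; apply: subtree_leaf_mem sub_i.
by rewrite (negbTE il) (IH _ ur sub_i).
Qed.

Fixpoint first_leaf t : I := match t with Leaf i => i | Node l _ => first_leaf l end.

Lemma first_leafP t : exists p, subtree t p = Some (Leaf (first_leaf t)).
Proof. by elim: t => [i|l [p sub_l] r _]; [exists [::] | exists (false :: p)]. Qed.

Lemma lcp_cat2l p q q' : lcp (p ++ q) (p ++ q') = p ++ lcp q q'.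
Proof. by elim: p => //= c p ->; rewrite eqxx. Qed.

Lemma lcp_fork p c q q' : lcp (p ++ c :: q) (p ++ ~~ c :: q') = p.
Proof. by rewrite lcp_cat2l /=; case: c; rewrite cats0. Qed.

Lemma cat_cons_eq p q q' (c c' : bool) : p ++ c :: q = p ++ c' :: q' -> c = c'.
Proof. by move/eqP; rewrite eqseq_cat // => /andP[_ /eqP[]]. Qed.

Definition below x (c : bool) y : Prop := exists r, y = (x.1, x.2 ++ c :: r).

(* [y] and [z] lie below different children of [x], which is therefore their meet. *)
Definition fork x y z : Prop := exists c, below x c y /\ below x (~~ c) z.

Lemma below_side_unique x c c' y : below x c y -> below x c' y -> c = c'.
Proof. by move=> [r ->] [r' [/cat_cons_eq]]. Qed.

Lemma fork_neq x y z : fork x y z -> y <> z.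
Proof. by move=> [c [yc zc]] yz; subst z; case: c yc zc => /below_side_unique H /H. Qed.

Lemma fork_cons n b p q q' :
  fork (n, p) (n, q) (n, q') -> fork (n, b :: p) (n, b :: q) (n, b :: q').
Proof. by move=> [c [[r [->]] [r' [->]]]]; exists c; split; [exists r | exists r']. Qed.

Lemma fork_lcp x y z : fork x y z -> x = (y.1, lcp y.2 z.2).
Proof. by case: x => n p [c [[r ->] [r' ->]]]; rewrite /= lcp_fork. Qed.

Lemma leaf_pos_fork t n i j : i \in leaves t -> j \in leaves t -> i != j ->
  (exists l r, subtree t (lcp (leaf_pos t i) (leaf_pos t j)) = Some (Node l r)) /\
  fork (n, lcp (leaf_pos t i) (leaf_pos t j)) (n, leaf_pos t i) (n, leaf_pos t j).
Proof.
elim: t => [k|l IHl r IHr] /=; first by rewrite !inE => /eqP -> /eqP ->; rewrite eqxx.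
rewrite !mem_cat => ti tj ij.
case: (boolP (i \in leaves l)) => il; case: (boolP (j \in leaves l)) => jl /=.
- by have [? /(fork_cons false)] := IHl il jl ij.
- by split; [exists l, r | exists false; split; eexists].
- by split; [exists l, r | exists true; split; eexists].
- rewrite (negbTE il) in ti; rewrite (negbTE jl) in tj.
  by have [? /(fork_cons true)] := IHr ti tj ij.
Qed.

Lemma fnode_cat F n p q :
  fnode F (n, p ++ q) = obind (fun u => subtree u q) (fnode F (n, p)).
Proof. by rewrite /fnode /=; case: onth => //= t; apply: subtree_cat. Qed.

Lemma is_innerP F x : is_inner F x <-> exists l r, fnode F x = Some (Node l r).
Proof.
by rewrite /is_inner; case: fnode => [[i|l r]|]; split => //; [case=> ? [] | eauto | case=> ? []].
Qed.

Lemma is_leafP F x i : is_leaf F x i <-> fnode F x = Some (Leaf i).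
Proof. by rewrite /is_leaf; case: fnode => [[k|l r]|]; split => // [-> | []]. Qed.

Lemma is_leaf_fnode F x i : is_leaf F x i -> fnode F x <> None.
Proof. by move/is_leafP ->. Qed.

Definition tree_index F i := find (fun t => i \in leaves t) F.
Definition tree_of F i := nth (Leaf i) F (tree_index F i).
Definition leaf_vertex F i : fpos := (tree_index F i, leaf_pos (tree_of F i) i).
Definition lca_vertex F i j : fpos :=
  (tree_index F i, lcp (leaf_vertex F i).2 (leaf_vertex F j).2).

Lemma fork_lca_vertex F x i j :
  fork x (leaf_vertex F i) (leaf_vertex F j) -> lca_vertex F i j = x.
Proof. by move/fork_lcp ->. Qed.

Lemma below_lca_vertex F x c i j : below x c (leaf_vertex F i) ->
  below x c (leaf_vertex F j) -> below x c (lca_vertex F i j).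
Proof.
rewrite /lca_vertex -[tree_index F i]/((leaf_vertex F i).1).
move: (leaf_vertex F i) (leaf_vertex F j) => y z [r ->] [r' ->].
by exists (lcp r r'); rewrite /= lcp_cat2l /= eqxx.
Qed.

Section ForestOn.
Variable F : forest I.
Hypothesis F_on : forest_on F.

Lemma forest_on_leaves_uniq : uniq (flatten (map (@leaves I) F)).
Proof. by rewrite (perm_uniq F_on) enum_uniq. Qed.

Lemma forest_on_has i : has (fun t => i \in leaves t) F.
Proof.
have : has (fun s => i \in s) (map (@leaves I) F).
  by apply/hasP/flattenP; rewrite (perm_mem F_on) mem_enum.
by rewrite has_map.
Qed.

Lemma tree_index_lt i : tree_index F i < size F.
Proof. by rewrite -has_find forest_on_has. Qed.

Lemma tree_of_mem i : i \in leaves (tree_of F i).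
Proof. exact: (nth_find (Leaf i) (forest_on_has i)). Qed.

Lemma fnode_tree_index i p :
  fnode F (tree_index F i, p) = subtree (tree_of F i) p.
Proof. by rewrite /fnode onthE (nth_map (Leaf i)) ?tree_index_lt. Qed.

Lemma leaf_vertexP i : is_leaf F (leaf_vertex F i) i.
Proof. by apply/is_leafP; rewrite fnode_tree_index leaf_posP ?tree_of_mem. Qed.

Lemma tree_index_nth n t i : onth F n = Some t -> i \in leaves t ->
  tree_index F i = n /\ uniq (leaves t).
Proof.
move: forest_on_leaves_uniq; rewrite /tree_index.
elim: (F) n => [|t' F' IH] [|n] //=; rewrite cat_uniq => /and3P[ut' dis uF'].
  by move=> [<-] ->.
move=> Ft it; have iF' : i \in flatten (map (@leaves I) F').
  by apply/flattenP; exists (leaves t) => //; apply/onthP; exists n; rewrite onth_map Ft.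
have -> : (i \in leaves t') = false.
  by apply/negP => it'; move/negP: dis; apply; apply/hasP; exists i.
by have [-> ->] := IH n uF' Ft it.
Qed.

Lemma is_leaf_unique x i : is_leaf F x i -> x = leaf_vertex F i.
Proof.
case: x => n p /is_leafP; rewrite /fnode /=.
case Fn: (onth F n) => [t|] //= sub_i.
have [idx ut] := tree_index_nth Fn (subtree_leaf_mem sub_i).
rewrite /leaf_vertex /tree_of idx (onth_nth (Leaf i) _ _ _ Fn).
by rewrite -(leaf_pos_unique ut sub_i).
Qed.

Lemma lca_vertex_fork i j : i != j -> tree_index F i = tree_index F j ->
  is_inner F (lca_vertex F i j) /\ fork (lca_vertex F i j) (leaf_vertex F i) (leaf_vertex F j).
Proof.
move=> ij idx_ij.
have tj : tree_of F j = tree_of F i.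
  by rewrite /tree_of -idx_ij (set_nth_default (Leaf i)) ?tree_index_lt.
have := tree_of_mem j; rewrite tj => jt.
have [[l [r sub_lr]] fk] := leaf_pos_fork (tree_index F i) (tree_of_mem i) jt ij.
rewrite /lca_vertex /leaf_vertex -idx_ij tj; split => //.
by apply/is_innerP; exists l, r; rewrite fnode_tree_index.
Qed.

End ForestOn.

Lemma tforest_on T : tree_on T -> forest_on (tforest T).
Proof. by rewrite /forest_on /tforest /= cats0. Qed.

Lemma tree_on_mem T k : tree_on T -> k \in leaves T.
Proof. by move=> T_on; rewrite (perm_mem T_on) mem_enum. Qed.

Lemma tree_on_uniq T : tree_on T -> uniq (leaves T).
Proof. by move=> T_on; rewrite (perm_uniq T_on) enum_uniq. Qed.

Lemma lca_vertex_tforest T i j : tree_on T -> lca_vertex (tforest T) i j = (0, vij T i j).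
Proof.
by move=> T_on; rewrite /lca_vertex /leaf_vertex /tree_of /tree_index /= !tree_on_mem.
Qed.

Lemma children_forkP (phi : fpos -> fpos) x :
  (exists c0 c1 r0 r1, c0 <> c1 /\
     phi (x.1, rcons x.2 false) = ((phi x).1, (phi x).2 ++ c0 :: r0) /\
     phi (x.1, rcons x.2 true) = ((phi x).1, (phi x).2 ++ c1 :: r1)) <->
  exists d, forall c, below (phi x) (c (+) d) (phi (x.1, rcons x.2 c)).
Proof.
split=> [[c0 [c1 [r0 [r1 [c01 [E0 E1]]]]]] | [d sides]].
  have c1E : c1 = ~~ c0 by case: c0 c1 c01 {E0 E1} => [] [].
  by rewrite c1E in E1; exists c0 => -[]; [exists r1 | exists r0].
have [[r0 E0] [r1 E1]] := (sides false, sides true).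
by exists d, (~~ d), r0, r1; split; [case: (d) | split].
Qed.

Section ForestMap.
Variables (F G : forest I) (psi : fpos -> fpos).
Hypothesis psi_map : forest_map F G psi.

Lemma forest_map_desc n p r : fnode F (n, p ++ r) <> None ->
  exists r', psi (n, p ++ r) = ((psi (n, p)).1, (psi (n, p)).2 ++ r').
Proof.
have [_ _ _ psi_sides] := psi_map.
elim/last_ind: r => [|r c IH]; first by exists [::]; rewrite !cats0; case: psi.
rewrite -rcons_cat -cats1 fnode_cat.
case Fr: (fnode F (n, p ++ r)) => [[k|l l']|] //= _.
have [|r' Er'] := IH; first by rewrite Fr.
have r_in : is_inner F (n, p ++ r) by rewrite /is_inner Fr.
have /children_forkP[d /(_ c) [r'' /= Er'']] := psi_sides _ r_in.
by exists (r' ++ c (+) d :: r''); rewrite cats1 Er'' Er' /= -catA.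
Qed.

Lemma forest_map_below x : is_inner F x -> exists d, forall c y,
  below x c y -> fnode F y <> None -> below (psi x) (c (+) d) (psi y).
Proof.
have [_ _ _ psi_sides] := psi_map; case: x => n p x_in.
have /children_forkP[d sides] := psi_sides _ x_in.
exists d => c _ [r ->] Fy; rewrite /= -cat_rcons in Fy *.
have [r' ->] := forest_map_desc Fy; have [r'' /= ->] := sides c.
by exists (r'' ++ r'); rewrite /= -catA.
Qed.

Lemma forest_map_lca x y z i j : forest_on G -> is_inner F x -> fork x y z ->
  is_leaf F y i -> is_leaf F z j -> psi x = lca_vertex G i j.
Proof.
move=> G_on x_in [c [yc zc]] yi zj; have [psi_leaf _ _ _] := psi_map.
have [d below_psi] := forest_map_below x_in.
have [Fy Fz] := (is_leaf_fnode yi, is_leaf_fnode zj).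
apply/esym/fork_lca_vertex; exists (c (+) d).
rewrite -(is_leaf_unique G_on (psi_leaf _ _ yi)) -(is_leaf_unique G_on (psi_leaf _ _ zj)).
by rewrite -addNb; split; apply: below_psi.
Qed.

End ForestMap.

Lemma first_leaf_below F x l r c : fnode F x = Some (Node l r) ->
  exists y, below x c y /\ is_leaf F y (first_leaf (if c then r else l)).
Proof.
case: x => n p Fx; have [q sub_q] := first_leafP (if c then r else l).
exists (n, p ++ c :: q); split; first by exists q.
by apply/is_leafP; rewrite fnode_cat Fx; case: c sub_q.
Qed.

Lemma forest_map_comp_inner F G H chi phi' phi x : forest_on H ->
  forest_map F G chi -> forest_map G H phi' -> forest_map F H phi ->
  is_inner F x -> phi' (chi x) = phi x.
Proof.
move=> H_on chi_map phi'_map phi_map x_in.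
have [l [r Fx]] := iffLR (is_innerP _ _) x_in.
have [[y [xy yl]] [z [xz zr]]] := (first_leaf_below false Fx, first_leaf_below true Fx).
rewrite (forest_map_lca phi_map H_on x_in (ex_intro _ false (conj xy xz)) yl zr).
have [chi_leaf chi_inner _ _] := chi_map.
have [d below_chi] := forest_map_below chi_map x_in.
apply: (forest_map_lca phi'_map H_on (chi_inner _ x_in) _ (chi_leaf _ _ yl) (chi_leaf _ _ zr)).
have [Fy Fz] := (is_leaf_fnode yl, is_leaf_fnode zr).
by exists (false (+) d); rewrite -addNb; split; apply: below_chi.
Qed.

Lemma atom_inner i j x : is_inner (atom i j) x -> x = (0, [::]).
Proof.
case: x => [[|n] p]; rewrite /is_inner /fnode /=; first by case: p => [|[] []].
by rewrite onth_map; case: onth => //= k; case: p.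
Qed.

Lemma atom_le_of_same_tree F i j : forest_on F -> i != j ->
  tree_index F i = tree_index F j -> forest_le (atom i j) F.
Proof.
move=> F_on ij idx_ij.
have [lca_in [c [ic jc]]] := lca_vertex_fork F_on ij idx_ij.
pose phi x := if fnode (atom i j) x is Some (Leaf k) then leaf_vertex F k
               else lca_vertex F i j.
exists phi; split.
- by move=> x k /is_leafP; rewrite /phi => ->; apply: leaf_vertexP.
- by move=> x /atom_inner ->.
- by move=> x y /atom_inner -> /atom_inner ->.
- by move=> x /atom_inner ->; apply/(children_forkP phi); exists c => -[].
Qed.

Lemma atom_le_same_tree G i j : forest_on G -> forest_le (atom i j) G ->
  tree_index G i = tree_index G j.
Proof.
move=> G_on [al [al_leaf _ _ al_sides]].
have /children_forkP[d sides] := al_sides (0, [::]) Logic.I.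
have [[r0 /= E0] [r1 /= E1]] := (sides false, sides true).
have /is_leaf_unique Ei := al_leaf (0, [:: false]) i erefl.
have /is_leaf_unique Ej := al_leaf (0, [:: true]) j erefl.
rewrite -[tree_index G i]/((leaf_vertex G i).1) -[tree_index G j]/((leaf_vertex G j).1).
by rewrite -Ei // -Ej // E0 E1.
Qed.

Lemma atom_le_inner_vertex T F phi i j : tree_on T -> forest_le (atom i j) F ->
  forest_map F (tforest T) phi -> exists x, is_inner F x /\ phi x = (0, vij T i j).
Proof.
move=> T_on [al al_map] phi_map; have [al_leaf al_inner _ _] := al_map.
have root_in : is_inner (atom i j) (0, [::]) by [].
have [d below_al] := forest_map_below al_map root_in.
exists (al (0, [::])); split; first exact: al_inner.
rewrite -(lca_vertex_tforest i j T_on).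
apply: (forest_map_lca phi_map (tforest_on T_on) (al_inner _ root_in) _
          (al_leaf (0, [:: false]) i erefl) (al_leaf (0, [:: true]) j erefl)).
by exists (false (+) d); rewrite -addNb; split; apply: below_al => //; exists [::].
Qed.

Section Refinement.
Variables (F G H : forest I) (phi psi : fpos -> fpos).
Hypotheses (F_on : forest_on F) (G_on : forest_on G) (H_on : forest_on H).
Hypotheses (phi_map : forest_map F H phi) (psi_map : forest_map G H psi).
Hypothesis refines :
  forall i j, tree_index F i = tree_index F j -> tree_index G i = tree_index G j.

Definition refinement_map x : fpos :=
  match fnode F x with
  | Some (Leaf k) => leaf_vertex G k
  | Some (Node l r) => lca_vertex G (first_leaf l) (first_leaf r)
  | None => x
  end.

Lemma fork_leaves_same_tree x y z i j : fork x y z -> is_leaf F y i -> is_leaf F z j ->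
  i != j /\ tree_index G i = tree_index G j.
Proof.
move=> fk /(is_leaf_unique F_on) yi /(is_leaf_unique F_on) zj; split.
  by apply/eqP => ij; subst j; apply: (fork_neq fk); rewrite yi zj.
apply: refines; case: fk => c [[r yE] [r' zE]].
rewrite -[tree_index F i]/((leaf_vertex F i).1) -[tree_index F j]/((leaf_vertex F j).1).
by rewrite -yi -zj yE zE.
Qed.

Lemma lca_vertex_fork_leaves x y z i j : is_inner F x -> fork x y z ->
  is_leaf F y i -> is_leaf F z j ->
  is_inner G (lca_vertex G i j) /\ psi (lca_vertex G i j) = phi x.
Proof.
move=> x_in fk yi zj; have [ij idx_ij] := fork_leaves_same_tree fk yi zj.
have [lca_in lca_fk] := lca_vertex_fork G_on ij idx_ij.
split=> //; rewrite (forest_map_lca phi_map H_on x_in fk yi zj).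
exact: (forest_map_lca psi_map H_on lca_in lca_fk (leaf_vertexP G_on i) (leaf_vertexP G_on j)).
Qed.

Lemma refinement_map_inner x : is_inner F x ->
  is_inner G (refinement_map x) /\ psi (refinement_map x) = phi x.
Proof.
move=> x_in; have [l [r Fx]] := iffLR (is_innerP _ _) x_in.
have [[y [xy yl]] [z [xz zr]]] := (first_leaf_below false Fx, first_leaf_below true Fx).
rewrite /refinement_map Fx; apply: lca_vertex_fork_leaves x_in _ yl zr.
by exists false.
Qed.

Lemma refinement_map_fork x y z i j : is_inner F x -> fork x y z ->
  is_leaf F y i -> is_leaf F z j ->
  fork (refinement_map x) (leaf_vertex G i) (leaf_vertex G j).
Proof.
move=> x_in fk yi zj; have [ij idx_ij] := fork_leaves_same_tree fk yi zj.
have [lca_in psi_lca] := lca_vertex_fork_leaves x_in fk yi zj.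
have [rm_in psi_rm] := refinement_map_inner x_in.
have [_ _ psi_inj _] := psi_map.
rewrite -(psi_inj _ _ lca_in rm_in); last by rewrite psi_lca psi_rm.
exact: (lca_vertex_fork G_on ij idx_ij).2.
Qed.

Lemma refinement_map_below x : is_inner F x -> exists d, forall c y i,
  below x c y -> is_leaf F y i -> below (refinement_map x) (c (+) d) (leaf_vertex G i).
Proof.
move=> x_in; have [l [r Fx]] := iffLR (is_innerP _ _) x_in.
have [[y0 [xy0 y0l]] [z0 [xz0 z0r]]] := (first_leaf_below false Fx, first_leaf_below true Fx).
have [e [e_l ne_r]] := refinement_map_fork x_in (ex_intro _ false (conj xy0 xz0)) y0l z0r.
exists e => -[] y i xy yi.
- have [f [f_l nf_i]] := refinement_map_fork x_in (ex_intro _ false (conj xy0 xy)) y0l yi.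
  by rewrite -(below_side_unique f_l e_l).
- have [f [f_i nf_r]] := refinement_map_fork x_in (ex_intro _ false (conj xy xz0)) yi z0r.
  by rewrite -[e]negbK -(below_side_unique nf_r ne_r) negbK.
Qed.

Lemma refinement_map_forest_map : forest_map F G refinement_map.
Proof.
have [_ _ phi_inj _] := phi_map.
split.
- by move=> x k /is_leafP Fx; rewrite /refinement_map Fx; apply: leaf_vertexP.
- by move=> x /refinement_map_inner[].
- move=> x x' x_in x'_in rmE; apply: phi_inj => //.
  by rewrite -(refinement_map_inner x_in).2 -(refinement_map_inner x'_in).2 rmE.
move=> x x_in; apply/children_forkP.
have [l [r Fx]] := iffLR (is_innerP _ _) x_in.
have [d rm_below] := refinement_map_below x_in.
exists d => c; case: x Fx x_in rm_below => n p Fx x_in rm_below /=.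
have Fy : fnode F (n, rcons p c) = Some (if c then r else l).
  by rewrite -cats1 fnode_cat Fx /= subtree_nil.
rewrite {2}/refinement_map Fy; case: (if c then r else l) Fy => [k | l' r'] Fy.
  by apply: (rm_below c _ k); [exists [::]; rewrite cats1 | apply/is_leafP].
have [[y [[q yE] yl]] [z [[q' zE] zr]]] :=
  (first_leaf_below false Fy, first_leaf_below true Fy).
apply: below_lca_vertex; [apply: (rm_below c y) yl | apply: (rm_below c z) zr].
- by exists (false :: q); rewrite yE /= cat_rcons.
- by exists (true :: q'); rewrite zE /= cat_rcons.
Qed.

End Refinement.

Lemma forest_le_refinement F G H : forest_on F -> forest_on G -> forest_on H ->
  forest_le F H -> forest_le G H ->
  (forall i j, tree_index F i = tree_index F j -> tree_index G i = tree_index G j) ->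
  forest_le F G.
Proof.
move=> F_on G_on H_on [phi phi_map] [psi psi_map] refines.
by exists (refinement_map F G); apply: refinement_map_forest_map phi_map psi_map refines.
Qed.

Fixpoint restrict t (C : pred I) : option (btree I) :=
  match t with
  | Leaf i => if C i then Some (Leaf i) else None
  | Node l r =>
    match restrict l C, restrict r C with
    | Some a, Some b => Some (Node a b)
    | Some a, None => Some a
    | None, Some b => Some b
    | None, None => None
    end
  end.

(* The position in [t] of the vertex at position [p] of [restrict t C]. *)
Fixpoint restrict_pos t (C : pred I) p : seq bool :=
  match t with
  | Leaf _ => [::]
  | Node l r =>
    match restrict l C, restrict r C with
    | Some _, Some _ =>
        if p is b :: p' then b :: restrict_pos (if b then r else l) C p' else [::]
    | Some _, None => false :: restrict_pos l C p
    | None, Some _ => true :: restrict_pos r C p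
    | None, None => [::]
    end
  end.

(* The inner vertices of [restrict t C], as positions in [t]. *)
Fixpoint split_vertices t (C : pred I) : seq (seq bool) :=
  match t with
  | Leaf _ => [::]
  | Node l r =>
    (if has C (leaves l) && has C (leaves r) then [:: [::]] else [::]) ++
    map (cons false) (split_vertices l C) ++ map (cons true) (split_vertices r C)
  end.

Implicit Types (C D : pred I).

Lemma restrict_leaves t C : if restrict t C is Some u then leaves u = filter C (leaves t)
  else filter C (leaves t) = [::].
Proof.
elim: t => [i|l IHl r IHr] /=; first by case: (C i).
rewrite filter_cat; move: IHl IHr.
by case: (restrict l C) => [a|]; case: (restrict r C) => [b|] /= -> ->; rewrite ?cats0.
Qed.

Lemma leaves_neq_nil t : leaves t != [::].
Proof. by elim: t => [i|l IHl r IHr] //=; case: (leaves l) IHl. Qed.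

Lemma restrict_has t C u : restrict t C = Some u -> has C (leaves t).
Proof.
move=> tCu; have := restrict_leaves t C.
by rewrite tCu has_filter => <-; apply: leaves_neq_nil.
Qed.

Lemma restrict_some t C : has C (leaves t) -> exists u, restrict t C = Some u.
Proof.
by have := restrict_leaves t C; case: restrict => [u|]; [exists u | rewrite has_filter => ->].
Qed.

Lemma restrict_pos_leaf t C u p i : restrict t C = Some u ->
  subtree u p = Some (Leaf i) -> subtree t (restrict_pos t C p) = Some (Leaf i).
Proof.
elim: t u p => [k|l IHl r IHr] u p /=; first by case: (C k) => // -[<-]; case: p.
case El: (restrict l C) => [a|]; case Er: (restrict r C) => [b|] //= [<-] //.
- by case: p => [|[] p] //=; [apply: IHr | apply: IHl].
- exact: IHl.
- exact: IHr.
Qed.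

Lemma restrict_pos_split t C u p l r : restrict t C = Some u ->
  subtree u p = Some (Node l r) -> restrict_pos t C p \in split_vertices t C.
Proof.
have cons_inj (c : bool) : injective (cons c) by move=> ? ? [].
elim: t u p => [k|l' IHl r' IHr] u p /=; first by case: (C k) => // -[<-]; case: p.
case El: (restrict l' C) => [a|]; case Er: (restrict r' C) => [b|] //= [<-].
- case: p => [|[] p] /= => [_ | sub | sub]; rewrite !mem_cat.
  + by rewrite (restrict_has El) (restrict_has Er) inE.
  + by rewrite (mem_map (cons_inj true)) (IHr _ _ Er sub) !orbT.
  + by rewrite (mem_map (cons_inj false)) (IHl _ _ El sub) !orbT.
- by move=> sub; rewrite !mem_cat (mem_map (cons_inj false)) (IHl _ _ El sub) !orbT.
- by move=> sub; rewrite !mem_cat (mem_map (cons_inj true)) (IHr _ _ Er sub) !orbT.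
Qed.

Lemma restrict_pos_inj t C u p p' : restrict t C = Some u -> subtree u p <> None ->
  subtree u p' <> None -> restrict_pos t C p = restrict_pos t C p' -> p = p'.
Proof.
elim: t u p p' => [k|l IHl r IHr] u p p' /=.
  by case: (C k) => // -[<-]; case: p => //; case: p'.
case El: (restrict l C) => [a|]; case Er: (restrict r C) => [b|] //= [<-].
- case: p p' => [|c p] [|c' p'] //= up up' [cc']; subst c'.
  case: c up up' => up up' E.
    by rewrite (IHr _ _ _ Er up up' E).
  by rewrite (IHl _ _ _ El up up' E).
- by move=> up up' [/(IHl _ _ _ El up up')].
- by move=> up up' [/(IHr _ _ _ Er up up')].
Qed.

Lemma restrict_pos_children t C u p l r : restrict t C = Some u ->
  subtree u p = Some (Node l r) -> exists c r0 r1,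
    restrict_pos t C (rcons p false) = restrict_pos t C p ++ c :: r0 /\
    restrict_pos t C (rcons p true) = restrict_pos t C p ++ ~~ c :: r1.
Proof.
elim: t u p => [k|l' IHl r' IHr] u p /=; first by case: (C k) => // -[<-]; case: p.
case El: (restrict l' C) => [a|]; case Er: (restrict r' C) => [b|] //= [<-].
- case: p => [|[] p] /= => [_ | sub | sub]; first by exists false; eexists; eexists.
  + by have [c [r0 [r1 [-> ->]]]] := IHr _ _ Er sub; exists c, r0, r1.
  + by have [c [r0 [r1 [-> ->]]]] := IHl _ _ El sub; exists c, r0, r1.
- by move=> sub; have [c [r0 [r1 [-> ->]]]] := IHl _ _ El sub; exists c, r0, r1.
- by move=> sub; have [c [r0 [r1 [-> ->]]]] := IHr _ _ Er sub; exists c, r0, r1.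
Qed.

Lemma split_vertices_node t C q : q \in split_vertices t C ->
  exists l r, subtree t q = Some (Node l r).
Proof.
elim: t q => [k|l IHl r IHr] q //=.
rewrite !mem_cat => /or3P[| /mapP[q' q'l ->] | /mapP[q' q'r ->]] /=.
- by case: ifP; rewrite // inE => _ /eqP ->; exists l, r.
- exact: IHl.
- exact: IHr.
Qed.

Lemma split_vertices_uniq t C : uniq (split_vertices t C).
Proof.
have cons_inj (c : bool) : injective (cons c) by move=> ? ? [].
elim: t => [k|l IHl r IHr] //=; rewrite !cat_uniq !map_inj_uniq // IHl IHr /= andbT.
apply/and3P; split; first by case: ifP.
- by apply/hasPn => ?; rewrite mem_cat => /orP[] /mapP[q _ ->]; case: ifP.
- by apply/hasPn => ? /mapP[q _ ->]; apply/negP => /mapP[q' _].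
Qed.

Lemma size_split_vertices t C : size (split_vertices t C) = (count C (leaves t)).-1.
Proof.
elim: t => [k|l IHl r IHr] /=; first by case: (C k).
rewrite !size_cat !size_map IHl IHr count_cat !has_count.
by case: (count C (leaves l)) => [|m]; case: (count C (leaves r)) => [|m'] //=; rewrite addnS.
Qed.

Lemma split_vertices_sub t C D : subpred C D ->
  {subset split_vertices t C <= split_vertices t D}.
Proof.
move=> CD; elim: t => [k|l IHl r IHr] //= q.
rewrite !mem_cat => /or3P[| /mapP[q' /IHl q'l ->] | /mapP[q' /IHr q'r ->]].
- by case: ifP => // /andP[Cl Cr]; rewrite (sub_has CD Cl) (sub_has CD Cr) => ->.
- by rewrite map_f ?orbT.
- by rewrite map_f ?orbT.
Qed.

Lemma eq_split_vertices t C D : C =1 D -> split_vertices t C = split_vertices t D.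
Proof. by move=> CD; elim: t => [k|l IHl r IHr] //=; rewrite IHl IHr !(eq_has CD). Qed.

Lemma lcp_leaf_pos_split t C i j : C i -> C j -> i != j ->
  i \in leaves t -> j \in leaves t -> lcp (leaf_pos t i) (leaf_pos t j) \in split_vertices t C.
Proof.
move=> Ci Cj ij; elim: t => [k|l IHl r IHr] /=.
  by rewrite !inE => /eqP ik /eqP jk; rewrite ik jk eqxx in ij.
rewrite !mem_cat => ti tj.
have has_l k : C k -> k \in leaves l -> has C (leaves l) by move=> Ck kl; apply/hasP; exists k.
have has_r k : C k -> k \in leaves r -> has C (leaves r) by move=> Ck kr; apply/hasP; exists k.
case: (boolP (i \in leaves l)) => il; case: (boolP (j \in leaves l)) => jl /=.
- by rewrite map_f ?orbT ?IHl.
- by rewrite (negbTE jl) in tj; rewrite (has_l i) // (has_r j) // inE eqxx.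
- by rewrite (negbTE il) in ti; rewrite (has_l j) // (has_r i) // inE eqxx.
- rewrite (negbTE il) in ti; rewrite (negbTE jl) in tj.
  by rewrite map_f ?orbT ?IHr.
Qed.

(* By counting: the restriction to [m] leaves has [m - 1] split vertices. *)
Lemma split_vertices_predU t C D i j : i \in leaves t -> j \in leaves t -> C i -> D j ->
  (forall k, C k -> D k -> False) ->
  uniq (split_vertices t C ++ split_vertices t D ++ [:: lcp (leaf_pos t i) (leaf_pos t j)]) ->
  split_vertices t (predU C D) =i
    split_vertices t C ++ split_vertices t D ++ [:: lcp (leaf_pos t i) (leaf_pos t j)].
Proof.
move=> ti tj Ci Dj CD uniq_CD.
have ij : i != j by apply/eqP => ij; subst j; apply: CD Ci Dj.
have sub_CD : {subset split_vertices t C ++ split_vertices t D ++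
                      [:: lcp (leaf_pos t i) (leaf_pos t j)] <= split_vertices t (predU C D)}.
  move=> q; rewrite !mem_cat inE => /or3P[qC | qD | /eqP ->].
  - by apply: split_vertices_sub qC => k /= ->.
  - by apply: split_vertices_sub qD => k /= ->; rewrite orbT.
  - by apply: lcp_leaf_pos_split; rewrite //= ?Ci ?Dj ?orbT.
have count_CD : count (predU C D) (leaves t) = count C (leaves t) + count D (leaves t).
  rewrite -count_predUI (@eq_count _ (predI C D) pred0) ?count_pred0 ?addn0 // => k /=.
  by apply/negP => /andP[Ck Dk]; apply: CD Ck Dk.
have C_pos : 0 < count C (leaves t) by rewrite -has_count; apply/hasP; exists i.
have D_pos : 0 < count D (leaves t) by rewrite -has_count; apply/hasP; exists j.
have size_CD : size (split_vertices t (predU C D)) <=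
    size (split_vertices t C ++ split_vertices t D ++ [:: lcp (leaf_pos t i) (leaf_pos t j)]).
  rewrite !size_cat !size_split_vertices count_CD /= addn1.
  by case: (count C _) (count D _) C_pos D_pos => [|a] [|b] //= _ _; rewrite addnS.
by have [_ eq_CD] := uniq_min_size uniq_CD sub_CD size_CD; move=> q; rewrite eq_CD.
Qed.

Definition fiber (lab : I -> I) (r : I) : pred I := fun k => lab k == r.

Definition edge_vertex T (e : I * I) : seq bool := vij T e.1 e.2.

(* The first and last clauses say that the fibers of [lab] are the connected
   components of the graph on [I] with edge list [s]. *)
Definition component_labelling T (lab : I -> I) (s : seq (I * I)) : Prop :=
  [/\ forall e, e \in s -> lab e.1 = lab e.2,
      forall k, {subset split_vertices T (fiber lab (lab k)) <= map (edge_vertex T) s},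
      forall k k' q, q \in split_vertices T (fiber lab (lab k)) ->
        q \in split_vertices T (fiber lab (lab k')) -> lab k = lab k' &
      forall (A : Type) (f : I -> A), (forall e, e \in s -> f e.1 = f e.2) ->
        forall k k', lab k = lab k' -> f k = f k'].

Definition fiberU (lab : I -> I) i j : pred I := predU (fiber lab (lab i)) (fiber lab (lab j)).

Definition merge_label (lab : I -> I) i j : I -> I :=
  fun k => if lab k == lab j then lab i else lab k.

Lemma merge_labelE lab i j k :
  merge_label lab i j k = if fiberU lab i j k then lab i else lab k.
Proof.
rewrite /merge_label /fiberU /fiber /=.
case: (eqVneq (lab k) (lab j)) => [_ | _]; first by rewrite orbT.
by rewrite orbF; case: eqP.
Qed.

Lemma merge_label_fiber lab i j k : fiber (merge_label lab i j) (merge_label lab i j k) =1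
  if fiberU lab i j k then fiberU lab i j else fiber lab (lab k).
Proof.
move=> y; rewrite /fiber !merge_labelE /fiberU /fiber /=.
case: (boolP ((lab k == lab i) || (lab k == lab j))) => ink;
  case: (boolP ((lab y == lab i) || (lab y == lab j))) => iny //=; rewrite ?eqxx.
- by rewrite iny.
- by move: iny; rewrite negb_or => /andP[/negbTE -> /negbTE ->].
- move: ink; rewrite negb_or => /andP[ki kj]; case/orP: iny => /eqP -> //.
  by rewrite eq_sym (negbTE ki) eq_sym (negbTE kj).
Qed.

Lemma component_labelling_nil T : tree_on T -> component_labelling T id [::].
Proof.
move=> T_on; have no_split k : split_vertices T (fiber id (id k)) = [::].
  apply: size0nil; rewrite size_split_vertices.
  have : count (fiber id k) (leaves T) <= 1.
    by rewrite (@eq_count _ _ (pred1 k)) // count_uniq_mem ?leq_b1 ?tree_on_uniq.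
  by case: count => [|[]].
by split=> // [k q | k k' q | A f _ k k' ->]; rewrite ?no_split.
Qed.

Section NewEdge.
Variables (T : btree I) (lab : I -> I) (s : seq (I * I)) (i j : I).
Hypotheses (T_on : tree_on T) (lab_comp : component_labelling T lab s).
Hypotheses (ij : i != j) (vij_s : vij T i j \notin map (edge_vertex T) s).

Lemma new_edge_labels_neq : lab i != lab j.
Proof.
have [_ splits_s _ _] := lab_comp.
apply: contra vij_s => /eqP lab_ij; apply: (splits_s i).
by apply: lcp_leaf_pos_split; rewrite ?tree_on_mem // /fiber lab_ij.
Qed.

Lemma split_vertices_fiberU : split_vertices T (fiberU lab i j) =i
  split_vertices T (fiber lab (lab i)) ++ split_vertices T (fiber lab (lab j)) ++
  [:: vij T i j].
Proof.
have [_ splits_s splits_disj _] := lab_comp; have lab_ij := new_edge_labels_neq.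
apply: split_vertices_predU; rewrite ?tree_on_mem /fiber ?eqxx //.
  by move=> k /eqP -> /eqP lab_ij'; rewrite lab_ij' eqxx in lab_ij.
rewrite cat_uniq cats1 rcons_uniq !split_vertices_uniq andbT /= -cats1.
apply/andP; split; last by apply: contra vij_s => /(splits_s j).
apply/hasPn => q; rewrite mem_cat inE => /orP[q_j | /eqP ->].
  by apply/negP => /splits_disj /(_ q_j) /eqP; apply/negP.
by apply: contra vij_s => /(splits_s i).
Qed.

Lemma split_vertices_fiberU_notin k q : ~~ fiberU lab i j k ->
  q \in split_vertices T (fiberU lab i j) -> q \notin split_vertices T (fiber lab (lab k)).
Proof.
have [_ splits_s splits_disj _] := lab_comp.
rewrite /fiberU /fiber /= negb_or => /andP[ki kj].
rewrite split_vertices_fiberU !mem_cat inE => /or3P[q_i | q_j | /eqP ->].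
- by apply/negP => /(splits_disj _ _ _ q_i) lab_ik; rewrite lab_ik eqxx in ki.
- by apply/negP => /(splits_disj _ _ _ q_j) lab_jk; rewrite lab_jk eqxx in kj.
- by apply: contra vij_s => /(splits_s k).
Qed.

Lemma component_labelling_cons :
  component_labelling T (merge_label lab i j) ((i, j) :: s).
Proof.
have [lab_s splits_s splits_disj lab_min] := lab_comp.
split.
- move=> e; rewrite inE => /orP[/eqP -> | e_s] /=.
    by rewrite !merge_labelE /fiberU /fiber /= !eqxx orbT.
  by rewrite /merge_label (lab_s e e_s).
- move=> k q; rewrite (eq_split_vertices _ (merge_label_fiber lab i j k)) /= inE.
  case: ifP => _; last by move/splits_s ->; rewrite orbT.
  rewrite split_vertices_fiberU !mem_cat inE.
  by case/or3P=> [/splits_s -> | /splits_s -> | ->]; rewrite ?orbT.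
- move=> k k' q; rewrite !(eq_split_vertices _ (merge_label_fiber lab i j _)) !merge_labelE.
  case: ifP => k_ij; case: ifP => k'_ij // q_k q_k'.
  + by move: (split_vertices_fiberU_notin (negbT k'_ij) q_k); rewrite q_k'.
  + by move: (split_vertices_fiberU_notin (negbT k_ij) q_k'); rewrite q_k.
  + exact: splits_disj q_k q_k'.
move=> A f f_s k k'; rewrite !merge_labelE.
have f_lab := lab_min A f (fun e e_s => f_s e (@mem_behead _ ((i, j) :: s) _ e_s)).
have f_ij k0 : fiberU lab i j k0 -> f k0 = f i.
  case/orP=> /eqP lab_k0; first exact: f_lab.
  by rewrite (f_lab _ _ lab_k0) (f_s (i, j) (mem_head _ _)).
case: ifP => k_ij; case: ifP => k'_ij.
- by rewrite (f_ij k k_ij) (f_ij k' k'_ij).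
- by move=> /f_lab <-; rewrite (f_ij k k_ij).
- by move=> /f_lab ->; rewrite (f_ij k' k'_ij).
- exact: f_lab.
Qed.

End NewEdge.

Lemma component_labelling_exists T s : tree_on T -> uniq (map (edge_vertex T) s) ->
  (forall e, e \in s -> e.1 != e.2) -> exists lab, component_labelling T lab s.
Proof.
move=> T_on; elim: s => [|[i j] s IH] /=; first by exists id; apply: component_labelling_nil.
case/andP=> vij_s uniq_s neq_s.
have [|lab lab_s] := IH uniq_s; first by move=> e e_s; apply: neq_s; rewrite inE e_s orbT.
exists (merge_label lab i j); apply: component_labelling_cons => //.
exact: (neq_s (i, j) (mem_head _ _)).
Qed.

Section FiberForest.
Variables (T : btree I) (lab : I -> I).
Hypothesis T_on : tree_on T.

Definition labels : seq I := undup (map lab (enum I)).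
Definition fiber_tree r : btree I := odflt (Leaf r) (restrict T (fiber lab r)).
Definition fiber_forest : forest I := map fiber_tree labels.

Definition fiber_forest_map x : fpos :=
  if onth labels x.1 is Some r then (0, restrict_pos T (fiber lab r) x.2) else x.

Lemma labels_mem r : r \in labels -> exists k, r = lab k.
Proof. by rewrite mem_undup => /mapP[k _ ->]; exists k. Qed.

Lemma lab_in_labels k : lab k \in labels.
Proof. by rewrite mem_undup map_f ?mem_enum. Qed.

Lemma restrict_fiber r : r \in labels -> restrict T (fiber lab r) = Some (fiber_tree r).
Proof.
move=> /labels_mem[k ->]; have [|u tku] := @restrict_some T (fiber lab (lab k)).
  by apply/hasP; exists k; [apply: tree_on_mem | rewrite /fiber].
by rewrite /fiber_tree tku.
Qed.

Lemma fnode_fiber_forest n p w : fnode fiber_forest (n, p) = Some w -> exists k,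
  [/\ onth labels n = Some (lab k),
      restrict T (fiber lab (lab k)) = Some (fiber_tree (lab k)) &
      subtree (fiber_tree (lab k)) p = Some w].
Proof.
rewrite /fnode /fiber_forest onth_map; case nr: onth => [r|] //= sub_w.
have /labels_mem[k rk] : r \in labels by apply/onthP; exists n.
by exists k; rewrite -rk restrict_fiber //; apply/onthP; exists n.
Qed.

Lemma fiber_forest_on : forest_on fiber_forest.
Proof.
rewrite /forest_on /fiber_forest -map_comp.
rewrite (_ : map _ labels = map (fun r => filter (fiber lab r) (leaves T)) labels); last first.
  apply/eq_in_map => r /restrict_fiber tr /=.
  by have := restrict_leaves T (fiber lab r); rewrite tr.
apply: perm_trans T_on; apply: perm_flatten_fibers; first exact: undup_uniq.
by move=> _ /mapP[k _ ->]; apply: lab_in_labels.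
Qed.

Lemma tree_index_fiber_forest k : tree_index fiber_forest k = index (lab k) labels.
Proof.
rewrite /tree_index /fiber_forest find_map /index; apply: eq_in_find => r r_lab /=.
have := restrict_leaves T (fiber lab r); rewrite restrict_fiber // => ->.
by rewrite mem_filter tree_on_mem // andbT eq_sym.
Qed.

Lemma fiber_forest_map_inner x : is_inner fiber_forest x -> exists2 q,
  fiber_forest_map x = (0, q) & exists k, q \in split_vertices T (fiber lab (lab k)).
Proof.
case: x => n p /is_innerP[l [r /fnode_fiber_forest[k [nk tk sub_lr]]]].
rewrite /fiber_forest_map /= nk; eexists; first by [].
by exists k; apply: restrict_pos_split tk sub_lr.
Qed.

Hypothesis disjoint_splits : forall k k' q, q \in split_vertices T (fiber lab (lab k)) ->
  q \in split_vertices T (fiber lab (lab k')) -> lab k = lab k'.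

Lemma fiber_forest_map_forest_map :
  forest_map fiber_forest (tforest T) fiber_forest_map.
Proof.
split.
- move=> [n p] i /is_leafP/fnode_fiber_forest[k [nk tk sub_i]].
  by apply/is_leafP; rewrite /fiber_forest_map /= nk; apply: restrict_pos_leaf tk sub_i.
- move=> [n p] /is_innerP[l [r /fnode_fiber_forest[k [nk tk sub_lr]]]].
  have /split_vertices_node[l' [r' sub']] := restrict_pos_split tk sub_lr.
  by apply/is_innerP; exists l', r'; rewrite /fiber_forest_map /= nk.
- move=> [n p] [n' p'] /is_innerP[l [r /fnode_fiber_forest[k [nk tk sub]]]].
  move=> /is_innerP[l' [r' /fnode_fiber_forest[k' [n'k' tk' sub']]]].
  rewrite /fiber_forest_map /= nk n'k' => -[pp'].
  have kk' : lab k = lab k'.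
    apply: disjoint_splits (restrict_pos_split tk sub) _.
    by rewrite pp'; apply: restrict_pos_split tk' sub'.
  rewrite -kk' in n'k' tk' sub' pp'; congr pair.
    by rewrite -(onth_index (undup_uniq _) nk) -(onth_index (undup_uniq _) n'k').
  by apply: restrict_pos_inj tk _ _ pp'; rewrite ?sub ?sub'.
- move=> [n p] /is_innerP[l [r /fnode_fiber_forest[k [nk tk sub]]]].
  apply/(children_forkP fiber_forest_map); rewrite /fiber_forest_map /= nk.
  have [c [r0 [r1 [E0 E1]]]] := restrict_pos_children tk sub.
  by exists c => -[]; [exists r1; rewrite E1 | exists r0; rewrite E0].
Qed.

End FiberForest.

Section Join.
Variables (T : btree I) (n : nat) (pr : 'I_n -> I * I) (lab : I -> I).
Hypotheses (T_on : tree_on T) (pr_neq : forall m, (pr m).1 != (pr m).2).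
Hypothesis lab_components : component_labelling T lab (map pr (enum 'I_n)).

Lemma fiber_forest_join :
  is_join_below T (fun m => atom (pr m).1 (pr m).2) (fiber_forest T lab).
Proof.
have [lab_pr _ splits_disj lab_min] := lab_components.
have F0_on := fiber_forest_on lab T_on.
have F0_map := fiber_forest_map_forest_map T_on splits_disj.
have pr_mem m : pr m \in map pr (enum 'I_n) by rewrite map_f ?mem_enum.
split=> //; first by exists (fiber_forest_map T lab).
  move=> m; apply: atom_le_of_same_tree (pr_neq m) _ => //.
  by rewrite !tree_index_fiber_forest //; congr index; apply: lab_pr.
move=> G G_on G_le atoms_le.
apply: (forest_le_refinement F0_on G_on (tforest_on T_on) _ G_le).
  by exists (fiber_forest_map T lab).
move=> i j; rewrite !tree_index_fiber_forest //.
move=> /(index_inj i (lab_in_labels lab i) (lab_in_labels lab j)).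
by apply: lab_min => _ /mapP[m _ ->]; apply: atom_le_same_tree G_on (atoms_le m).
Qed.

Lemma join_inner_vertex F phi x :
  is_join_below T (fun m => atom (pr m).1 (pr m).2) F ->
  forest_map F (tforest T) phi -> is_inner F x ->
  exists m, phi x = (0, vij T (pr m).1 (pr m).2).
Proof.
move=> [F_on _ _ F_min] phi_map x_in.
have [_ splits_pr splits_disj _] := lab_components.
have F0_map := fiber_forest_map_forest_map T_on splits_disj.
have [_ F0_le atoms_le _] := fiber_forest_join.
have [chi chi_map] := F_min _ (fiber_forest_on lab T_on) F0_le atoms_le.
rewrite -(forest_map_comp_inner (tforest_on T_on) chi_map F0_map phi_map x_in).
have [_ chi_inner _ _] := chi_map.
have [q -> [k /(splits_pr k) /mapP[_ /mapP[m _ ->] ->]]] :=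
  fiber_forest_map_inner T_on (chi_inner _ x_in).
by exists m.
Qed.

End Join.

End Forests.

Unset Implicit Arguments.

Theorem proposition5p3 (I : finType) (T : btree I) (k : nat)
    (pr : 'I_k -> (I * I)%type) :
  tree_on T ->
  (forall m, (pr m).1 != (pr m).2) ->
  injective (fun m => vij T (pr m).1 (pr m).2) ->
  (exists F, is_join_below T (fun m => atom (pr m).1 (pr m).2) F) /\
  (forall F, is_join_below T (fun m => atom (pr m).1 (pr m).2) F ->
   forall phi, forest_map F (tforest T) phi ->
   forall q : seq bool,
     (exists x, is_inner F x /\ phi x = (0%N, q)) <->
     (exists m, q = vij T (pr m).1 (pr m).2)).
Proof.
move=> T_on pr_neq vij_inj.
have [lab lab_components] : exists lab, component_labelling T lab (map pr (enum 'I_k)).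
  apply: component_labelling_exists => //; last by move=> _ /mapP[m _ ->]; apply: pr_neq.
  by rewrite -map_comp map_inj_uniq ?enum_uniq.
split; first by exists (fiber_forest T lab); apply: fiber_forest_join.
move=> F F_join phi phi_map q; split.
- move=> [x [x_in phi_x]].
  have [m] := join_inner_vertex T_on pr_neq lab_components F_join phi_map x_in.
  by rewrite phi_x => -[->]; exists m.
- move=> [m ->]; have [_ _ atoms_le _] := F_join.
  exact: atom_le_inner_vertex T_on (atoms_le m) phi_map.
Qed.
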